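(* Let $k$ be a field, $G$ a finite group, $W$ a simple $kB(G,G)$-module, and $P$ a minimal group for $W$. Then: (1) $W$ is isomorphic to a quotient of the $kB(G,G)$-module $k\bar B(G,P)$; (2) if $W$ is isomorphic to a quotient of the $kB(G,G)$-module $k\bar B(G,H)$ for some finite group $H$, then $H$ is isomorphic to a subquotient of $P$.
   Context: $kB(X,Y)=k\otimes_{\mathbb Z}B(X,Y)$, $B(X,Y)$ the Grothendieck group of finite $(X,Y)$-bisets; composition $U\times_YV$ extended bilinearly, so $kB(G,G)$ is an algebra acting on $kB(G,H)$. A minimal group for a simple $kB(G,G)$-module $W$ is a finite group $P$ of minimal order such that $B(G,P)B(P,G)W\ne0$ (compositions of elements of $B(G,P)$ and $B(P,G)$ acting on $W$). A subquotient of $P$ is $S/T$ with $T\trianglelefteq S\le P$. $K\sqsubset H$ means $K$ is isomorphic to a subquotient of $H$ with $|K|<|H|$; $kI(G,H)=\sum_{K\sqsubset H}kB(G,K)kB(K,H)$, a $kB(G,G)$-submodule, and $k\bar B(G,H)=kB(G,H)/kI(G,H)$. *)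

From HB Require Import structures.
From mathcomp Require Import all_boot all_fingroup all_order all_algebra.
Set Implicit Arguments.
Unset Strict Implicit.
Unset Printing Implicit Defensive.
Import GRing.Theory.
Local Open Scope ring_scope.

(* Finite bisets.  A (X,Y)-biset is a finite set U with a left action of X    *)
(* and a right action of Y which commute; we record the two-sided action      *)
(*   bact x u y = x . u . y                                                   *)
(* and require the axioms only for x in X, y in Y (predicate [is_biset]).     *)

Record biset (xT yT : finGroupType) := Biset {
  bcar :> finType;
  bact : xT -> bcar -> yT -> bcar }.
Arguments bact {xT yT} b x u y.

Definition is_biset (xT yT : finGroupType) (X : {set xT}) (Y : {set yT})
    (U : biset xT yT) : Prop :=
  (forall u, bact U 1%g u 1%g = u) /\
  (forall x1 x2 y1 y2 u, x1 \in X -> x2 \in X -> y1 \in Y -> y2 \in Y ->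
     bact U x1 (bact U x2 u y2) y1 = bact U (x1 * x2)%g u (y2 * y1)%g).

Definition biset_iso (xT yT : finGroupType) (X : {set xT}) (Y : {set yT})
    (U V : biset xT yT) : Prop :=
  exists h : U -> V, bijective h /\
    forall x u y, x \in X -> y \in Y -> h (bact U x u y) = bact V x (h u) y.

Definition bunion (xT yT : finGroupType) (U V : biset xT yT) : biset xT yT :=
  @Biset xT yT (U + V)%type
    (fun x s y => match s with
                  | inl u => inl (bact U x u y)
                  | inr v => inr (bact V x v y) end).

Definition bid (gT : finGroupType) (G : {group gT}) : biset gT gT :=
  @Biset gT gT {g : gT | g \in G}
    (fun x g y => insubd g (x * val g * y)%g).

(* composition U x_Y V : the set of classes of U x V under                   *)
(* (u.y, v) ~ (u, y.v), y in Y; the class of (u,v) is {(u.y, y^-1.v)}.      *)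
Section Composition.
Variables (xT yT zT : finGroupType) (Y : {group yT}).
Variables (U : biset xT yT) (V : biset yT zT).

Definition borb (p : U * V) : {set U * V} :=
  [set (bact U 1%g p.1 y, bact V y^-1%g p.2 1%g) | y in Y].

Definition bcomp_car := {A : {set U * V} | [exists p, A == borb p]}.

Lemma borb_in (p : U * V) : [exists q, borb p == borb q].
Proof. by apply/existsP; exists p. Qed.

Definition bcomp_cls (p : U * V) : bcomp_car := exist _ (borb p) (borb_in p).

Definition bcomp_act (x : xT) (A : bcomp_car) (z : zT) : bcomp_car :=
  match [pick p in val A] with
  | Some p => bcomp_cls (bact U x p.1 1%g, bact V 1%g p.2 z)
  | None => A
  end.

Definition bcomp : biset xT zT := @Biset xT zT bcomp_car bcomp_act.
End Composition.

(* kB(G,G)-modules.  Since kB(X,Y) = k (x) B(X,Y) and B(X,Y) is the          *)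
(* Grothendieck group of finite (X,Y)-bisets, a k-linear map out of kB(X,Y)  *)
(* is the same as an assignment on finite bisets which is invariant under    *)
(* isomorphism and additive on disjoint unions.  A kB(G,G)-module structure   *)
(* on a k-vector space W is thus given by rho : bisets -> (W -> W).          *)

Definition is_Bmodule (k : fieldType) (W : lmodType k) (gT : finGroupType)
    (G : {group gT}) (rho : biset gT gT -> W -> W) : Prop :=
  [/\ (forall U, is_biset G G U -> forall (a : k) (u v : W),
          rho U (a *: u + v) = a *: rho U u + rho U v),
      (forall U V, is_biset G G U -> is_biset G G V -> biset_iso G G U V ->
          forall w, rho U w = rho V w),
      (forall U V, is_biset G G U -> is_biset G G V ->
          forall w, rho (bunion U V) w = rho U w + rho V w),
      (forall U V, is_biset G G U -> is_biset G G V ->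
          forall w, rho (bcomp G U V) w = rho U (rho V w)) &
      (forall w, rho (bid G) w = w)].

Definition is_submodule (k : fieldType) (W : lmodType k) (gT : finGroupType)
    (G : {group gT}) (rho : biset gT gT -> W -> W) (S : W -> Prop) : Prop :=
  [/\ S 0,
      (forall u v, S u -> S v -> S (u + v)),
      (forall (a : k) u, S u -> S (a *: u)) &
      (forall U u, is_biset G G U -> S u -> S (rho U u))].

Definition simple_Bmodule (k : fieldType) (W : lmodType k) (gT : finGroupType)
    (G : {group gT}) (rho : biset gT gT -> W -> W) : Prop :=
  [/\ is_Bmodule G rho,
      exists w : W, w != 0 &
      forall S, is_submodule G rho S ->
        (forall w, S w) \/ (forall w, S w -> w = 0)].

Definition passes_through (k : fieldType) (W : lmodType k) (gT : finGroupType)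
    (G : {group gT}) (rho : biset gT gT -> W -> W)
    (qT : finGroupType) (Q : {group qT}) : Prop :=
  exists (U : biset gT qT) (V : biset qT gT) (w : W),
    [/\ is_biset G Q U, is_biset Q G V & rho (bcomp Q U V) w != 0].

Definition minimal_group (k : fieldType) (W : lmodType k) (gT : finGroupType)
    (G : {group gT}) (rho : biset gT gT -> W -> W)
    (pT : finGroupType) (P : {group pT}) : Prop :=
  passes_through G rho P /\
  forall (qT : finGroupType) (Q : {group qT}),
    (#|Q| < #|P|)%N -> ~ passes_through G rho Q.

Definition subquotient (kT hT : finGroupType) (K : {group kT})
    (H : {group hT}) : Prop :=
  exists (S T : {group hT}), [/\ S \subset H, (T <| S)%g & K \isog (S / T)%g].

Definition sqlt (kT hT : finGroupType) (K : {group kT}) (H : {group hT})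
  : Prop := subquotient K H /\ (#|K| < #|H|)%N.

Definition is_Bhom (k : fieldType) (W : lmodType k) (gT : finGroupType)
    (G : {group gT}) (rho : biset gT gT -> W -> W)
    (hT : finGroupType) (H : {group hT}) (f : biset gT hT -> W) : Prop :=
  [/\ (forall U V, is_biset G H U -> is_biset G H V -> biset_iso G H U V ->
          f U = f V),
      (forall U V, is_biset G H U -> is_biset G H V ->
          f (bunion U V) = f U + f V) &
      (forall U V, is_biset G G U -> is_biset G H V ->
          f (bcomp G U V) = rho U (f V))].

Definition kills_I (k : fieldType) (W : lmodType k) (gT : finGroupType)
    (G : {group gT}) (hT : finGroupType) (H : {group hT})
    (f : biset gT hT -> W) : Prop :=
  forall (kT : finGroupType) (K : {group kT}), sqlt K H ->
    forall (U : biset gT kT) (V : biset kT hT),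
      is_biset G K U -> is_biset K H V -> f (bcomp K U V) = 0.

Definition Bhom_onto (k : fieldType) (W : lmodType k) (gT : finGroupType)
    (G : {group gT}) (hT : finGroupType) (H : {group hT})
    (f : biset gT hT -> W) : Prop :=
  forall w : W, exists (n : nat) (c : 'I_n -> k) (V : 'I_n -> biset gT hT),
    (forall i, is_biset G H (V i)) /\ w = \sum_(i < n) c i *: f (V i).

(* W is isomorphic to a quotient of the kB(G,G)-module kBbar(G,H):
   there is a surjective kB(G,G)-homomorphism kB(G,H) -> W vanishing on
   kI(G,H) *)
Definition quotient_of_Bbar (k : fieldType) (W : lmodType k) (gT : finGroupType)
    (G : {group gT}) (rho : biset gT gT -> W -> W)
    (hT : finGroupType) (H : {group hT}) : Prop :=
  exists f : biset gT hT -> W,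
    [/\ is_Bhom G rho H f, kills_I G H f & Bhom_onto G H f].

From HB Require Import structures.
From mathcomp Require Import all_boot all_fingroup all_order all_algebra.
From mathcomp Require Import zify.
Set Implicit Arguments.
Unset Strict Implicit.
Unset Printing Implicit Defensive.

Import GRing.Theory.

(* (1) If [U x_P V] acts nontrivially on [w], then [U |-> (U x_P V) w] is a
   homomorphism kB(G,P) -> W; it is onto since W is simple, and it kills kI(G,P)
   because a group K [ P is too small to pass through W.
   (2) If f : kB(G,H) -> W is onto and kills kI(G,H), write w = sum c_i f(X_i):
   some f(U x_P (V x_G X_i)) is nonzero.  Split the (P,H)-biset V x_G X_i into
   transitive pieces.  A transitive biset with point stabiliser L <= P x H factors
   through the section p2(L)/k2(L) of H; if this section is smaller than H the
   piece lies in kI(G,H), so f kills it.  Otherwise k2(L) = 1 and p2(L) = H, and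
   L is the graph of a morphism from p1(L) <= P onto H, so H is a subquotient of P. *)

Section BisetAction.
Variables (xT yT : finGroupType) (X : {group xT}) (Y : {group yT}).
Variables (U : biset xT yT) (HU : is_biset X Y U).

Lemma bact1 u : bact U 1%g u 1%g = u.
Proof. by case: HU. Qed.

Lemma bactM x1 x2 y1 y2 u : x1 \in X -> x2 \in X -> y1 \in Y -> y2 \in Y ->
  bact U x1 (bact U x2 u y2) y1 = bact U (x1 * x2)%g u (y2 * y1)%g.
Proof. by case: HU => _; apply. Qed.

End BisetAction.

Section Composition.
Variables (xT yT zT : finGroupType).
Variables (X : {group xT}) (Y : {group yT}) (Z : {group zT}).
Variables (U : biset xT yT) (V : biset yT zT).
Hypotheses (HU : is_biset X Y U) (HV : is_biset Y Z V).

Local Notation cls := (@bcomp_cls _ _ _ Y U V).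

Definition bshift (p : U * V) (y : yT) : U * V :=
  (bact U 1%g p.1 y, bact V y^-1%g p.2 1%g).

Lemma mem_borb (p q : U * V) :
  reflect (exists2 y, y \in Y & q = bshift p y) (q \in borb Y p).
Proof. exact: imsetP. Qed.

Lemma bshift1 (p : U * V) : bshift p 1%g = p.
Proof. by rewrite /bshift invg1 (bact1 HU) (bact1 HV); case: p. Qed.

Lemma bshiftM (p : U * V) y y' : y \in Y -> y' \in Y ->
  bshift (bshift p y) y' = bshift p (y * y')%g.
Proof.
move=> Hy Hy'; rewrite /bshift /= (bactM HU) ?(bactM HV) ?groupV ?group1 //.
by rewrite mulg1 mul1g invMg.
Qed.

Lemma borb_refl (p : U * V) : p \in borb Y p.
Proof. by apply/mem_borb; exists 1%g; rewrite ?bshift1. Qed.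

Lemma borb_sub (p q : U * V) : q \in borb Y p -> {subset borb Y q <= borb Y p}.
Proof.
move=> /mem_borb [y Hy ->] r /mem_borb [y' Hy' ->].
by apply/mem_borb; exists (y * y')%g; rewrite ?groupM ?bshiftM.
Qed.

Lemma borb_sym (p q : U * V) : q \in borb Y p -> p \in borb Y q.
Proof.
move=> /mem_borb [y Hy ->]; apply/mem_borb; exists y^-1%g; rewrite ?groupV //.
by rewrite bshiftM ?groupV // mulgV bshift1.
Qed.

Lemma bcomp_cls_shift (p : U * V) y : y \in Y -> cls (bshift p y) = cls p.
Proof.
move=> Hy; apply: val_inj; apply/setP => r /=.
have Hp : bshift p y \in borb Y p by apply/mem_borb; exists y.
apply/idP/idP; first exact: borb_sub.
by apply: borb_sub; apply: borb_sym.
Qed.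

Definition bcomp_repr (A : bcomp Y U V) : U * V := xchoose (existsP (valP A)).

Lemma bcomp_reprK A : cls (bcomp_repr A) = A.
Proof. by apply: val_inj; apply/esym/eqP; exact: (xchooseP (existsP (valP A))). Qed.

Lemma bcomp_clsP A : exists p, A = cls p.
Proof. by exists (bcomp_repr A); rewrite bcomp_reprK. Qed.

Lemma bcomp_repr_cls (p : U * V) : exists2 y, y \in Y & bcomp_repr (cls p) = bshift p y.
Proof.
apply/mem_borb; have /(congr1 val) /= <- := bcomp_reprK (cls p).
exact: borb_refl.
Qed.

Definition bcomp_lift (T : Type) (g : U * V -> T) (A : bcomp Y U V) : T :=
  g (bcomp_repr A).

Lemma bcomp_liftE (T : Type) (g : U * V -> T) :
  (forall p y, y \in Y -> g (bshift p y) = g p) ->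
  forall p, bcomp_lift g (cls p) = g p.
Proof. by move=> Hg p; rewrite /bcomp_lift; have [y Hy ->] := bcomp_repr_cls p; apply: Hg. Qed.

Lemma bcomp_actE x z (p : U * V) : x \in X -> z \in Z ->
  bact (bcomp Y U V) x (cls p) z = cls (bact U x p.1 1%g, bact V 1%g p.2 z).
Proof.
move=> Hx Hz /=; rewrite /bcomp_act; case: pickP => [q /mem_borb [y Hy ->] | Hnone].
  rewrite -(bcomp_cls_shift (bact U x p.1 1%g, bact V 1%g p.2 z) Hy) /bshift /=.
  by rewrite !(bactM HU) ?(bactM HV) ?group1 ?groupV // ?mulg1 ?mul1g.
by have := Hnone p; rewrite /= borb_refl.
Qed.

Lemma card_bcomp0r : #|V| = 0%N -> #|bcomp Y U V| = 0%N.
Proof. by move=> V0; apply: eq_card0 => A; move: V0; rewrite (cardD1 (bcomp_repr A).2). Qed.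

Lemma is_biset_bcomp : is_biset X Z (bcomp Y U V).
Proof.
split=> [A | x1 x2 z1 z2 A Hx1 Hx2 Hz1 Hz2]; have [p ->] := bcomp_clsP A.
  by rewrite bcomp_actE ?group1 // (bact1 HU) (bact1 HV); case: p.
rewrite !bcomp_actE ?groupM //= (bactM HU) ?(bactM HV) ?group1 //.
by rewrite ?mulg1 ?mul1g.
Qed.

End Composition.

Definition biset_morph (xT yT : finGroupType) (X : {set xT}) (Y : {set yT})
    (U V : biset xT yT) (h : U -> V) : Prop :=
  forall x u y, x \in X -> y \in Y -> h (bact U x u y) = bact V x (h u) y.

Definition bempty {xT yT : finGroupType} : biset xT yT :=
  @Biset xT yT void (fun _ e _ => e).

Section Isomorphism.
Variables (xT yT : finGroupType) (X : {group xT}) (Y : {group yT}).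

Lemma biset_iso_refl (U : biset xT yT) : biset_iso X Y U U.
Proof. by exists id; split => //; exists id. Qed.

Lemma biset_morph_inv (U V : biset xT yT) (h : U -> V) (g : V -> U) :
  cancel h g -> cancel g h -> biset_morph X Y h -> biset_morph X Y g.
Proof. by move=> hK gK Hh x v y Hx Hy; apply: (can_inj hK); rewrite Hh // !gK. Qed.

Lemma biset_iso_sym (U V : biset xT yT) : biset_iso X Y U V -> biset_iso X Y V U.
Proof.
move=> [h [[g hK gK] Hh]]; exists g; split; first by exists h.
exact: biset_morph_inv Hh.
Qed.

Lemma is_biset_bempty : is_biset X Y bempty.
Proof. by split=> [[]|? ? ? ? []]. Qed.

Lemma biset_morph_right (U V : biset xT yT) (h : U -> V) : biset_morph X Y h ->
  forall u y, y \in Y -> h (bact U 1%g u y) = bact V 1%g (h u) y.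
Proof. by move=> Eh u y; apply: Eh. Qed.

Lemma biset_morph_left (U V : biset xT yT) (h : U -> V) : biset_morph X Y h ->
  forall u x, x \in X -> h (bact U x u 1%g) = bact V x (h u) 1%g.
Proof. by move=> Eh u x Hx; apply: Eh. Qed.

Lemma biset_iso_trans (U V W : biset xT yT) :
  biset_iso X Y U V -> biset_iso X Y V W -> biset_iso X Y U W.
Proof.
move=> [h [bh Hh]] [h' [bh' Hh']]; exists (h' \o h); split; first exact: bij_comp.
by move=> x u y Hx Hy /=; rewrite Hh // Hh'.
Qed.

Lemma is_biset_bunion (U V : biset xT yT) :
  is_biset X Y U -> is_biset X Y V -> is_biset X Y (bunion U V).
Proof.
move=> HU HV; split; first by case=> [u|v] /=; rewrite ?(bact1 HU) ?(bact1 HV).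
by move=> x1 x2 y1 y2 [u|v] ? ? ? ? /=; rewrite ?(bactM HU) ?(bactM HV).
Qed.

End Isomorphism.

Section CompositionMap.
Variables (xT xT' yT zT zT' : finGroupType) (Y : {group yT}).
Variables (X : {group xT}) (X' : {group xT'}) (Z : {group zT}) (Z' : {group zT'}).
Variables (U : biset xT yT) (U' : biset xT' yT) (V : biset yT zT) (V' : biset yT zT').
Hypotheses (HU : is_biset X Y U) (HV : is_biset Y Z V).
Hypotheses (HU' : is_biset X' Y U') (HV' : is_biset Y Z' V').
Variables (hU : U -> U') (hV : V -> V').

Definition bcomp_map : bcomp Y U V -> bcomp Y U' V' :=
  bcomp_lift (fun p => bcomp_cls Y (hU p.1, hV p.2)).

(* Only the [Y]-actions matter for [bcomp_map] to be well defined. *)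
Hypothesis hU_right : forall u y, y \in Y -> hU (bact U 1%g u y) = bact U' 1%g (hU u) y.
Hypothesis hV_left : forall v y, y \in Y -> hV (bact V y v 1%g) = bact V' y (hV v) 1%g.

Lemma bcomp_mapE (p : U * V) :
  bcomp_map (bcomp_cls Y p) = bcomp_cls Y (hU p.1, hV p.2).
Proof.
apply: (bcomp_liftE HU HV) => -[u v] y Hy /=; rewrite hU_right ?hV_left ?groupV //.
exact: (bcomp_cls_shift HU' HV' (hU u, hV v) Hy).
Qed.

End CompositionMap.

Arguments bcomp_map {xT xT' yT zT zT'} Y {U U' V V'} hU hV.

Section CompositionIso.
Variables (xT yT zT : finGroupType).
Variables (X : {group xT}) (Y : {group yT}) (Z : {group zT}).
Variables (U U' : biset xT yT) (V V' : biset yT zT).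
Hypotheses (HU : is_biset X Y U) (HV : is_biset Y Z V).
Hypotheses (HU' : is_biset X Y U') (HV' : is_biset Y Z V').

Lemma bcomp_map_morph (hU : U -> U') (hV : V -> V') :
  biset_morph X Y hU -> biset_morph Y Z hV -> biset_morph X Z (bcomp_map Y hU hV).
Proof.
move=> EU EV x A z Hx Hz; have [p ->] := bcomp_clsP A.
have mapE := bcomp_mapE HU HV HU' HV' (biset_morph_right EU) (biset_morph_left EV).
by rewrite (bcomp_actE HU HV) // !mapE (bcomp_actE HU' HV') //= EU ?EV ?group1.
Qed.

Lemma bcomp_iso : biset_iso X Y U U' -> biset_iso Y Z V V' ->
  biset_iso X Z (bcomp Y U V) (bcomp Y U' V').
Proof.
move=> [hU [[gU hUK gUK] EU]] [hV [[gV hVK gVK] EV]].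
have EgU := biset_morph_inv hUK gUK EU; have EgV := biset_morph_inv hVK gVK EV.
have hE := bcomp_mapE HU HV HU' HV' (biset_morph_right EU) (biset_morph_left EV).
have gE := bcomp_mapE HU' HV' HU HV (biset_morph_right EgU) (biset_morph_left EgV).
exists (bcomp_map Y hU hV); split; last exact: bcomp_map_morph.
exists (bcomp_map Y gU gV) => A.
  by have [[u v] ->] := bcomp_clsP A; rewrite hE gE /= hUK hVK.
by have [[u v] ->] := bcomp_clsP A; rewrite gE hE /= gUK gVK.
Qed.

End CompositionIso.

Section Distributivity.
Variables (xT yT zT : finGroupType).
Variables (X : {group xT}) (Y : {group yT}) (Z : {group zT}).

Lemma bcomp_bunionl (U U' : biset xT yT) (V : biset yT zT) :
  is_biset X Y U -> is_biset X Y U' -> is_biset Y Z V ->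
  biset_iso X Z (bcomp Y (bunion U U') V) (bunion (bcomp Y U V) (bcomp Y U' V)).
Proof.
move=> HU HU' HV; have HUU := is_biset_bunion HU HU'.
pose g (p : bunion U U' * V) : bunion (bcomp Y U V) (bcomp Y U' V) :=
  match p.1 with
  | inl u => inl (bcomp_cls Y (u, p.2))
  | inr u => inr (bcomp_cls Y (u, p.2)) end.
have gE : forall p, bcomp_lift g (bcomp_cls Y p) = g p.
  apply: (bcomp_liftE HUU HV) => -[[u|u] v] y Hy; rewrite /g /=.
    by rewrite (bcomp_cls_shift HU HV (u, v) Hy).
  by rewrite (bcomp_cls_shift HU' HV (u, v) Hy).
have inlE := bcomp_mapE HU HV HUU HV (hU := inl : U -> bunion U U') (hV := id)
  (fun _ _ _ => erefl) (fun _ _ _ => erefl).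
have inrE := bcomp_mapE HU' HV HUU HV (hU := inr : U' -> bunion U U') (hV := id)
  (fun _ _ _ => erefl) (fun _ _ _ => erefl).
exists (bcomp_lift g); split.
  exists (fun s => match s with
                   | inl A => bcomp_map Y (inl : U -> bunion U U') id A
                   | inr A => bcomp_map Y (inr : U' -> bunion U U') id A end).
    by move=> A; have [[[u|u] v] ->] := bcomp_clsP A; rewrite gE /= ?inlE ?inrE.
  by case=> A; have [[u v] ->] := bcomp_clsP A; rewrite ?inlE ?inrE gE.
move=> x A z Hx Hz; have [[[u|u] v] ->] := bcomp_clsP A;
  rewrite (bcomp_actE HUU HV) // !gE /=.
  by congr inl; apply/esym/(bcomp_actE HU HV (u, v)).
by congr inr; apply/esym/(bcomp_actE HU' HV (u, v)).
Qed.

Lemma bcomp_bunionr (U : biset xT yT) (V V' : biset yT zT) :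
  is_biset X Y U -> is_biset Y Z V -> is_biset Y Z V' ->
  biset_iso X Z (bcomp Y U (bunion V V')) (bunion (bcomp Y U V) (bcomp Y U V')).
Proof.
move=> HU HV HV'; have HVV := is_biset_bunion HV HV'.
pose g (p : U * bunion V V') : bunion (bcomp Y U V) (bcomp Y U V') :=
  match p.2 with
  | inl v => inl (bcomp_cls Y (p.1, v))
  | inr v => inr (bcomp_cls Y (p.1, v)) end.
have gE : forall p, bcomp_lift g (bcomp_cls Y p) = g p.
  apply: (bcomp_liftE HU HVV) => -[u [v|v]] y Hy; rewrite /g /=.
    by rewrite (bcomp_cls_shift HU HV (u, v) Hy).
  by rewrite (bcomp_cls_shift HU HV' (u, v) Hy).
have inlE := bcomp_mapE HU HV HU HVV (hU := id) (hV := inl : V -> bunion V V')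
  (fun _ _ _ => erefl) (fun _ _ _ => erefl).
have inrE := bcomp_mapE HU HV' HU HVV (hU := id) (hV := inr : V' -> bunion V V')
  (fun _ _ _ => erefl) (fun _ _ _ => erefl).
exists (bcomp_lift g); split.
  exists (fun s => match s with
                   | inl A => bcomp_map Y id (inl : V -> bunion V V') A
                   | inr A => bcomp_map Y id (inr : V' -> bunion V V') A end).
    by move=> A; have [[u [v|v]] ->] := bcomp_clsP A; rewrite gE /= ?inlE ?inrE.
  by case=> A; have [[u v] ->] := bcomp_clsP A; rewrite ?inlE ?inrE gE.
move=> x A z Hx Hz; have [[u [v|v]] ->] := bcomp_clsP A;
  rewrite (bcomp_actE HU HVV) // !gE /=.
  by congr inl; apply/esym/(bcomp_actE HU HV (u, v)).
by congr inr; apply/esym/(bcomp_actE HU HV' (u, v)).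
Qed.

End Distributivity.

Section Associativity.
Variables (xT yT zT tT : finGroupType).
Variables (X : {group xT}) (Y : {group yT}) (Z : {group zT}) (T : {group tT}).
Variables (U : biset xT yT) (V : biset yT zT) (W : biset zT tT).
Hypotheses (HU : is_biset X Y U) (HV : is_biset Y Z V) (HW : is_biset Z T W).

Local Notation UV := (bcomp Y U V).
Local Notation VW := (bcomp Z V W).
Let HUV : is_biset X Z UV := is_biset_bcomp HU HV.
Let HVW : is_biset Y T VW := is_biset_bcomp HV HW.

Lemma bcomp_cls_actl (w : W) (v : V) y : y \in Y ->
  bcomp_cls Z (bact V y v 1%g, w) = bact VW y (bcomp_cls Z (v, w)) 1%g.
Proof. by move=> Hy; rewrite (bcomp_actE HV HW) ?group1 //= (bact1 HW). Qed.

Lemma bcomp_cls_actr (u : U) (v : V) z : z \in Z ->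
  bcomp_cls Y (u, bact V 1%g v z) = bact UV 1%g (bcomp_cls Y (u, v)) z.
Proof. by move=> Hz; rewrite (bcomp_actE HU HV) ?group1 //= (bact1 HU). Qed.

Definition bcomp_assoc_map : bcomp Z UV W -> bcomp Y U VW :=
  bcomp_lift (fun q : UV * W =>
    bcomp_map Y (id : U -> U) (fun v : V => bcomp_cls Z (v, q.2) : VW) q.1).

Definition bcomp_assoc_inv : bcomp Y U VW -> bcomp Z UV W :=
  bcomp_lift (fun p : U * VW =>
    bcomp_map Z (fun v : V => bcomp_cls Y (p.1, v) : UV) (id : W -> W) p.2).

Let assoc_mapE w := bcomp_mapE HU HV HU HVW (hU := id)
  (fun _ _ _ => erefl) (fun v y => bcomp_cls_actl w v (y := y)).

Let assoc_invE u := bcomp_mapE HV HW HUV HW (hV := id)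
  (fun v z => bcomp_cls_actr u v (z := z)) (fun _ _ _ => erefl).

Lemma bcomp_assoc_mapE (u : U) (v : V) (w : W) :
  bcomp_assoc_map (bcomp_cls Z (U := UV) (bcomp_cls Y (u, v), w)) =
  bcomp_cls Y (V := VW) (u, bcomp_cls Z (v, w)).
Proof.
rewrite /bcomp_assoc_map (bcomp_liftE HUV HW) ?assoc_mapE // => -[B w'] z Hz.
rewrite -[bshift _ _]/(bact UV 1%g B z, bact W z^-1 w' 1%g).
have [[u' v'] ->] := bcomp_clsP B.
rewrite -bcomp_cls_actr // !assoc_mapE /=.
by rewrite (bcomp_cls_shift HV HW (v', w') Hz).
Qed.

Lemma bcomp_assoc_invE (u : U) (v : V) (w : W) :
  bcomp_assoc_inv (bcomp_cls Y (V := VW) (u, bcomp_cls Z (v, w))) =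
  bcomp_cls Z (U := UV) (bcomp_cls Y (u, v), w).
Proof.
rewrite /bcomp_assoc_inv (bcomp_liftE HU HVW) ?assoc_invE // => -[u' C] y Hy.
rewrite -[bshift _ _]/(bact U 1%g u' y, bact VW y^-1 C 1%g).
have [[v' w'] ->] := bcomp_clsP C.
rewrite -bcomp_cls_actl ?groupV // !assoc_invE /=.
by rewrite (bcomp_cls_shift HU HV (u', v') Hy).
Qed.

Lemma bcomp_assoc : biset_iso X T (bcomp Z UV W) (bcomp Y U VW).
Proof.
exists bcomp_assoc_map; split.
  exists bcomp_assoc_inv => A.
    have [[B w] ->] := bcomp_clsP A; have [[u v] ->] := bcomp_clsP B.
    by rewrite bcomp_assoc_mapE bcomp_assoc_invE.
  have [[u C] ->] := bcomp_clsP A; have [[v w] ->] := bcomp_clsP C.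
  by rewrite bcomp_assoc_invE bcomp_assoc_mapE.
move=> x A t Hx Ht; have [[B w] ->] := bcomp_clsP A; have [[u v] ->] := bcomp_clsP B.
rewrite (bcomp_actE HUV HW) // (bcomp_actE HU HV) ?group1 // !bcomp_assoc_mapE.
rewrite (bcomp_actE HU HVW) // (bcomp_actE HV HW) ?group1 //.
Qed.

End Associativity.

Section Bmodule.
Local Open Scope ring_scope.
Variables (k : fieldType) (W : lmodType k) (gT : finGroupType) (G : {group gT}).
Variables (rho : biset gT gT -> W -> W) (HB : is_Bmodule G rho).

Lemma rho_lin U a u v : is_biset G G U -> rho U (a *: u + v) = a *: rho U u + rho U v.
Proof. by case: HB => Hlin _ _ _ _ HU; apply: Hlin. Qed.

Lemma rho0 U : is_biset G G U -> rho U 0 = 0.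
Proof.
move=> HU; apply: (addrI (rho U 0)); rewrite addr0.
by have := rho_lin 1 0 0 HU; rewrite !scale1r !addr0 => <-.
Qed.

Lemma rho_sum (I : Type) U (s : seq I) (c : I -> k) (F : I -> W) :
  is_biset G G U -> rho U (\sum_(i <- s) c i *: F i) = \sum_(i <- s) c i *: rho U (F i).
Proof.
move=> HU; elim: s => [|i s IHs]; first by rewrite !big_nil rho0.
by rewrite !big_cons rho_lin // IHs.
Qed.

Lemma rho_iso U V w : is_biset G G U -> is_biset G G V -> biset_iso G G U V ->
  rho U w = rho V w.
Proof. by move=> HU HV UV; case: HB => _ Hiso _ _ _; apply: Hiso. Qed.

Lemma rho_bunion U V w : is_biset G G U -> is_biset G G V ->
  rho (bunion U V) w = rho U w + rho V w.
Proof. by move=> HU HV; case: HB => _ _ Hadd _ _; apply: Hadd. Qed.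

Lemma rho_bcomp U V w : is_biset G G U -> is_biset G G V ->
  rho (bcomp G U V) w = rho U (rho V w).
Proof. by move=> HU HV; case: HB => _ _ _ Hcomp _; apply: Hcomp. Qed.

End Bmodule.

Section Bhom.
Local Open Scope ring_scope.
Variables (k : fieldType) (W : lmodType k) (gT hT : finGroupType).
Variables (G : {group gT}) (H : {group hT}) (rho : biset gT gT -> W -> W).
Variables (f : biset gT hT -> W) (Hf : is_Bhom G rho H f).

Lemma Bhom_iso U V : is_biset G H U -> is_biset G H V -> biset_iso G H U V -> f U = f V.
Proof. by case: Hf => Hiso _ _; apply: Hiso. Qed.

Lemma Bhom_bunion U V : is_biset G H U -> is_biset G H V -> f (bunion U V) = f U + f V.
Proof. by case: Hf => _ Hadd _; apply: Hadd. Qed.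

Lemma Bhom_bcomp U V : is_biset G G U -> is_biset G H V -> f (bcomp G U V) = rho U (f V).
Proof. by case: Hf => _ _ Hcomp; apply: Hcomp. Qed.

(* An empty biset [E] is isomorphic to [E + E], so additivity forces [f E = 0]. *)
Lemma Bhom_card0 E : is_biset G H E -> #|E| = 0%N -> f E = 0.
Proof.
move=> HE E0; have noE (e : E) : False by move: E0; rewrite (cardD1 e) inE.
have HEE := is_biset_bunion HE HE.
have Iso : biset_iso G H (bunion E E) E.
  exists (fun s => match s with inl e | inr e => e end); split=> [|x [e|e]] //.
  by exists inl => [[e|e]|e] //; case: (noE e).
apply: (addrI (f E)); rewrite addr0 -Bhom_bunion //.
exact: Bhom_iso.
Qed.

Definition Bspan (w : W) : Prop :=
  exists s : seq (k * {V : biset gT hT | is_biset G H V}),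
    w = \sum_(x <- s) x.1 *: f (sval x.2).

Lemma Bspan_onto : (forall w, Bspan w) -> Bhom_onto G H f.
Proof.
move=> Hspan w; have [s ->] := Hspan w.
pose d := (0 : k, exist (is_biset G H) bempty (is_biset_bempty G H)).
exists (size s), (fun i => (nth d s i).1), (fun i => sval (nth d s i).2).
by split=> [i|]; [exact: svalP | rewrite (big_nth d) big_mkord].
Qed.

Lemma Bspan_submodule : is_Bmodule G rho -> is_submodule G rho Bspan.
Proof.
move=> HB; split.
- by exists [::]; rewrite big_nil.
- by move=> _ _ [s ->] [t ->]; exists (s ++ t); rewrite big_cat.
- move=> a _ [s ->]; exists [seq (a * x.1, x.2) | x <- s].
  by rewrite big_map scaler_sumr; apply: eq_bigr => x _; rewrite scalerA.
- move=> U _ HU [s ->].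
  exists [seq (x.1, exist _ (bcomp G U (sval x.2)) (is_biset_bcomp HU (svalP x.2))) | x <- s].
  rewrite big_map (rho_sum HB) //; apply: eq_bigr => x _ /=.
  by rewrite Bhom_bcomp //; exact: svalP.
Qed.

Lemma simple_Bhom_onto V : simple_Bmodule G rho -> is_biset G H V -> f V != 0 ->
  Bhom_onto G H f.
Proof.
case=> HB _ Hsimple HV fV0; apply: Bspan_onto.
have [//|Hzero] := Hsimple _ (Bspan_submodule HB).
case/eqP: fV0; apply: Hzero; exists [:: (1, exist _ V HV)].
by rewrite big_seq1 scale1r.
Qed.

End Bhom.

Section CompositionEvaluation.
Local Open Scope ring_scope.
Variables (k : fieldType) (W : lmodType k) (gT : finGroupType) (G : {group gT}).
Variables (rho : biset gT gT -> W -> W) (HB : is_Bmodule G rho).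
Variables (pT : finGroupType) (P : {group pT}) (V : biset pT gT) (w : W).
Hypothesis HV : is_biset P G V.

Definition bcomp_eval (U : biset gT pT) : W := rho (bcomp P U V) w.

Lemma is_Bhom_bcomp_eval : is_Bhom G rho P bcomp_eval.
Proof.
have HUV U : is_biset G P U -> is_biset G G (bcomp P U V) by move/is_biset_bcomp; apply.
split=> [U U' HU HU' UU' | U U' HU HU' | U U' HU HU'].
- apply: (rho_iso HB); [exact: HUV | exact: HUV |].
  exact: (bcomp_iso HU HV HU' HV UU' (biset_iso_refl P G V)).
- rewrite /bcomp_eval -(rho_bunion HB); [| exact: HUV | exact: HUV].
  apply: (rho_iso HB); first exact/HUV/is_biset_bunion.
    exact: is_biset_bunion (HUV _ HU) (HUV _ HU').
  exact: bcomp_bunionl.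
- rewrite /bcomp_eval -(rho_bcomp HB); [| by [] | exact: HUV].
  apply: (rho_iso HB); first exact/HUV/is_biset_bcomp.
    exact: is_biset_bcomp HU (HUV _ HU').
  exact: bcomp_assoc.
Qed.

Lemma bcomp_eval_kills_I :
  (forall (qT : finGroupType) (Q : {group qT}),
     (#|Q| < #|P|)%N -> ~ passes_through G rho Q) ->
  kills_I G P bcomp_eval.
Proof.
move=> Hsmall qT Q [_ ltQP] U U' HU HU'; have HU'V := is_biset_bcomp HU' HV.
have HUU'V := is_biset_bcomp (is_biset_bcomp HU HU') HV.
rewrite /bcomp_eval (rho_iso HB w HUU'V (is_biset_bcomp HU HU'V) (bcomp_assoc HU HU' HV)).
apply/eqP; apply: contraT => Hnz; case: (Hsmall _ _ ltQP).
by exists U, (bcomp P U' V), w.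
Qed.

End CompositionEvaluation.

Lemma minimal_group_quotient_of_Bbar (k : fieldType) (W : lmodType k)
    (gT : finGroupType) (G : {group gT}) (rho : biset gT gT -> W -> W)
    (pT : finGroupType) (P : {group pT}) :
  simple_Bmodule G rho -> minimal_group G rho P -> quotient_of_Bbar G rho P.
Proof.
move=> Hsimple [[U [V [w [HU HV Hnz]]]] Hsmall]; have [HB _ _] := Hsimple.
exists (bcomp_eval rho P V w); split.
- exact: is_Bhom_bcomp_eval.
- exact: bcomp_eval_kills_I.
- exact: (simple_Bhom_onto (is_Bhom_bcomp_eval HB w HV) Hsimple HU Hnz).
Qed.

Definition btransitive (xT yT : finGroupType) (X : {set xT}) (Y : {set yT})
    (U : biset xT yT) (u0 : U) : Prop :=
  forall u, exists x y, [/\ x \in X, y \in Y & u = bact U x u0 y].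
Arguments btransitive {xT yT} X Y U u0.

Section SubBiset.
Variables (xT yT : finGroupType) (X : {group xT}) (Y : {group yT}).
Variables (U : biset xT yT) (HU : is_biset X Y U).

Definition bclosed (S : {set U}) : Prop :=
  forall x u y, x \in X -> y \in Y -> u \in S -> bact U x u y \in S.

Definition bsub (S : {set U}) : biset xT yT :=
  @Biset xT yT {u : U | u \in S} (fun x s y => insubd s (bact U x (val s) y)).

Lemma bsub_val S x s y : bclosed S -> x \in X -> y \in Y ->
  val (bact (bsub S) x s y) = bact U x (val s) y.
Proof. by move=> HS Hx Hy /=; rewrite insubdK //; apply: HS => //; exact: valP. Qed.

Lemma is_biset_bsub S : bclosed S -> is_biset X Y (bsub S).
Proof.
move=> HS; split=> [s | x1 x2 y1 y2 s Hx1 Hx2 Hy1 Hy2]; apply: val_inj.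
  by rewrite bsub_val ?group1 // (bact1 HU).
by rewrite !bsub_val ?groupM // (bactM HU).
Qed.

Lemma card_bsub S : #|bsub S| = #|S|.
Proof. by rewrite /= card_sig; apply: eq_card. Qed.

Lemma bclosedC S : bclosed S -> bclosed (~: S).
Proof.
move=> HS x u y Hx Hy; rewrite !inE; apply: contra => Hxuy.
have := HS x^-1%g _ y^-1%g (groupVr Hx) (groupVr Hy) Hxuy.
by rewrite (bactM HU) ?groupV // mulVg mulgV (bact1 HU).
Qed.

Lemma bsub_split_iso S : bclosed S ->
  biset_iso X Y U (bunion (bsub S) (bsub (~: S))).
Proof.
move=> HS; apply: biset_iso_sym.
pose g (s : bunion (bsub S) (bsub (~: S))) : U :=
  match s with inl a => val a | inr b => val b end.
exists g; split.
  apply: inj_card_bij; last by rewrite card_sum !card_bsub cardsC.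
  move=> [a|b] [a'|b'] /= E.
  - by congr inl; apply: val_inj.
  - by move: (valP a) (valP b'); rewrite /= E inE => ->.
  - by move: (valP b) (valP a'); rewrite /= E inE => /negbTE ->.
  - by congr inr; apply: val_inj.
move=> x [a|b] y Hx Hy /=; rewrite insubdK //; first by apply: HS => //; exact: valP.
by apply: bclosedC => //; exact: valP.
Qed.

Definition borbit (u0 : U) : {set U} := [set bact U x u0 y | x in X, y in Y].

Lemma mem_borbit u0 : u0 \in borbit u0.
Proof. by apply/imset2P; exists 1%g 1%g; rewrite ?(bact1 HU). Qed.

Lemma bclosed_borbit u0 : bclosed (borbit u0).
Proof.
move=> x u y Hx Hy /imset2P [x' y' Hx' Hy' ->].
by apply/imset2P; exists (x * x')%g (y' * y)%g; rewrite ?groupM ?(bactM HU).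
Qed.

Lemma btransitive_borbit u0 :
  btransitive X Y (bsub (borbit u0)) (Sub u0 (mem_borbit u0)).
Proof.
move=> s; have /imset2P [x y Hx Hy Es] := valP s.
by exists x, y; split=> //; apply: val_inj; rewrite bsub_val ?Es //; apply: bclosed_borbit.
Qed.

End SubBiset.

Section TransitiveFactorization.
Local Open Scope group_scope.
Variables (pT hT : finGroupType) (P : {group pT}) (H : {group hT}).
Variables (Y : biset pT hT) (HY : is_biset P H Y) (y0 : Y).

Definition bpt p h := bact Y p y0 h.

Lemma bpt_act q p h k : q \in P -> p \in P -> h \in H -> k \in H ->
  bact Y q (bpt p h) k = bpt (q * p) (h * k).
Proof. by move=> *; rewrite /bpt (bactM HY). Qed.

Lemma bpt_cong p h p' h' q k : p \in P -> h \in H -> p' \in P -> h' \in H ->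
  q \in P -> k \in H -> bpt p h = bpt p' h' -> bpt (q * p) (h * k) = bpt (q * p') (h' * k).
Proof. by move=> ? ? ? ? ? ? E; rewrite -!bpt_act // E. Qed.

Lemma bpt_r p h : p \in P -> h \in H -> bpt p h = bact Y 1 (bpt p 1) h.
Proof. by move=> *; rewrite bpt_act ?group1 // mul1g mul1g. Qed.

Lemma bpt_l p h : p \in P -> h \in H -> bpt p h = bact Y p (bpt 1 h) 1.
Proof. by move=> *; rewrite bpt_act ?group1 // mulg1 mulg1. Qed.

(* With L the stabiliser of y0 in P x H, [linkH] is p2(L), [stabH] is k2(L) and
   [sectH] is the section p2(L)/k2(L). *)
Definition linkH := [set h in H | [exists p in P, bpt p 1 == bpt 1 h]].
Definition stabH := [set h in H | bpt 1 h == bpt 1 1].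

Lemma linkHP h : reflect (h \in H /\ exists2 p, p \in P & bpt p 1 = bpt 1 h) (h \in linkH).
Proof.
rewrite inE; apply: (iffP andP) => [[Hh /existsP [p /andP [Hp /eqP E]]]|[Hh [p Hp E]]].
  by split => //; exists p.
by split => //; apply/existsP; exists p; rewrite Hp E eqxx.
Qed.

Lemma stabHP h : reflect (h \in H /\ bpt 1 h = bpt 1 1) (h \in stabH).
Proof. by rewrite inE; apply: (iffP andP) => [[? /eqP]|[? ->]]. Qed.

Lemma group_set_linkH : group_set linkH.
Proof.
apply/group_setP; split.
  by apply/linkHP; split; [exact: group1 | exists 1].
move=> h1 h2 /linkHP [H1 [p1 P1 E1]] /linkHP [H2 [p2 P2 E2]]; apply/linkHP.
split; first exact: groupM.
exists (p1 * p2); first exact: groupM.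
have := bpt_cong (group1 _) H2 P2 (group1 _) P1 (group1 _) (esym E2).
rewrite !mulg1 => <-.
have := bpt_cong P1 (group1 _) (group1 _) H1 (group1 _) H2 E1.
by rewrite !mul1g => ->.
Qed.

Lemma group_set_stabH : group_set stabH.
Proof.
apply/group_setP; split; first by apply/stabHP; split; [exact: group1|].
move=> h1 h2 /stabHP [H1 E1] /stabHP [H2 E2]; apply/stabHP.
split; first exact: groupM.
have := bpt_cong (group1 _) H1 (group1 _) (group1 _) (group1 _) H2 E1.
by rewrite !mul1g => ->.
Qed.

Canonical linkH_group := Group group_set_linkH.
Canonical stabH_group := Group group_set_stabH.

Lemma stabH_sub : stabH \subset linkH.
Proof.
apply/subsetP => t /stabHP [Ht E]; apply/linkHP; split => //; exists 1 => //.
Qed.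

Lemma bpt_stabH p h t : p \in P -> h \in H -> t \in stabH -> bpt p (t * h) = bpt p h.
Proof.
move=> Hp Hh /stabHP [Ht E].
have := bpt_cong (group1 _) Ht (group1 _) (group1 _) Hp Hh E.
by rewrite !mulg1 mul1g.
Qed.

Lemma linkH_norm : linkH \subset 'N(stabH).
Proof.
apply/subsetP => h /linkHP [Hh [p Hp E]]; rewrite inE; apply/subsetP => x.
case/imsetP => t Ht ->; apply/stabHP; have Ht' : t \in H.
  by move: Ht => /stabHP [].
split; first by rewrite groupJ.
have E1 : bpt 1 h^-1 = bpt p^-1 1.
  have := bpt_cong Hp (group1 _) (group1 _) Hh (groupVr Hp) (groupVr Hh) E.
  by rewrite mulVg mulgV mul1g mulg1.
rewrite /conjg.
have := bpt_cong (group1 _) (groupVr Hh) (groupVr Hp) (group1 _) (group1 _) (groupM Ht' Hh) E1.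
rewrite !mul1g => ->.
rewrite bpt_stabH ?groupVr //.
have := bpt_cong Hp (group1 _) (group1 _) Hh (groupVr Hp) (group1 _) E.
by rewrite mulVg !mulg1 ?mul1g => <-.
Qed.

Lemma stabH_normal : stabH <| linkH.
Proof. by rewrite /normal stabH_sub linkH_norm. Qed.

Local Notation kT := (coset_of stabH_group).
Definition sectH := (linkH_group / stabH_group)%G.
Local Notation K := sectH.

Lemma linkH_sub : linkH \subset H.
Proof. by apply/subsetP => h /linkHP []. Qed.

Lemma linkH_in h : h \in linkH -> h \in H.
Proof. by move/linkHP => []. Qed.

Lemma repr_sectH kk : kk \in K -> repr kk \in linkH.
Proof.
case/morphimP => z Nz Sz ->; have := mem_repr_coset (coset stabH_group z).
rewrite val_coset // => /rcosetP [t Ht ->]; apply: groupM => //.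
exact: (subsetP stabH_sub).
Qed.

Lemma bpt_repr_coset p h r : p \in P -> h \in H -> r \in linkH ->
  bpt p (repr (coset stabH_group r) * h) = bpt p (r * h).
Proof.
move=> Hp Hh Hr; have Nr : r \in 'N(stabH_group) := subsetP linkH_norm r Hr.
have := mem_repr_coset (coset stabH_group r); rewrite val_coset // => /rcosetP [t Ht ->].
by rewrite -mulgA (bpt_stabH (t:=t)) // groupM // linkH_in.
Qed.

Lemma bpt_reprM p h k1 k2 : p \in P -> h \in H -> k1 \in K -> k2 \in K ->
  bpt p (repr (k1 * k2) * h) = bpt p (repr k1 * repr k2 * h).
Proof.
move=> Hp Hh K1 K2.
have -> : k1 * k2 = coset stabH_group (repr k1 * repr k2).
  by rewrite morphM ?repr_coset_norm // /= !coset_reprK.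
by rewrite bpt_repr_coset // groupM // repr_sectH.
Qed.

Lemma bpt_reprV p h r : p \in P -> h \in H -> r \in linkH ->
  bpt p (repr (coset stabH_group r)^-1 * h) = bpt p (r^-1 * h).
Proof.
move=> Hp Hh Hr; have Nr : r \in 'N(stabH_group) := subsetP linkH_norm r Hr.
by rewrite -morphV // bpt_repr_coset // groupV.
Qed.

Definition plink r := odflt 1 [pick p in P | bpt p 1 == bpt 1 r].

Lemma plinkP r : r \in linkH -> plink r \in P /\ bpt (plink r) 1 = bpt 1 r.
Proof.
move=> /linkHP [Hr [p Hp E]]; rewrite /plink; case: pickP => [q /andP [Hq /eqP Eq]|H0] //=.
by have := H0 p; rewrite Hp E eqxx.
Qed.

Definition orbP_set := [set y : Y | [exists p in P, y == bpt p 1]].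
Definition orbH_set := [set y : Y | [exists h in H, y == bpt 1 h]].

Lemma orbPP y : reflect (exists2 p, p \in P & y = bpt p 1) (y \in orbP_set).
Proof.
rewrite inE; apply: (iffP existsP) => [[p /andP [Hp /eqP E]]|[p Hp E]].
  by exists p.
by exists p; rewrite Hp E eqxx.
Qed.

Lemma orbHP y : reflect (exists2 h, h \in H & y = bpt 1 h) (y \in orbH_set).
Proof.
rewrite inE; apply: (iffP existsP) => [[h /andP [Hh /eqP E]]|[h Hh E]].
  by exists h.
by exists h; rewrite Hh E eqxx.
Qed.

Definition orbP : biset pT kT :=
  @Biset pT kT {y : Y | y \in orbP_set}
    (fun p a kk => insubd a (bact Y p (val a) (repr kk))).

Definition orbH : biset kT hT :=
  @Biset kT hT {y : Y | y \in orbH_set}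
    (fun kk b h => insubd b (bact Y (plink (repr kk)) (val b) h)).

Lemma orbP_val (a : orbP) : exists2 q, q \in P & val a = bpt q 1.
Proof. by apply/orbPP; exact: (valP a). Qed.

Lemma orbH_val (b : orbH) : exists2 h, h \in H & val b = bpt 1 h.
Proof. by apply/orbHP; exact: (valP b). Qed.

Lemma orbP_act p (a : orbP) kk : p \in P -> kk \in K ->
  val (bact orbP p a kk) = bact Y p (val a) (repr kk).
Proof.
move=> Hp Hk /=; rewrite insubdK //.
have [q Hq ->] := orbP_val a; have Hr := repr_sectH Hk; have [Pr Er] := plinkP Hr.
apply/orbPP; exists (p * q * plink (repr kk)); first by rewrite !groupM.
rewrite bpt_act ?linkH_in // mul1g.
have := bpt_cong Pr (group1 _) (group1 _) (linkH_in Hr) (groupM Hp Hq) (group1 _) Er.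
by rewrite !mulg1 => ->.
Qed.

Lemma orbH_bact kk (b : orbH) h h' : kk \in K -> h \in H -> h' \in H -> val b = bpt 1 h' ->
  bact Y (plink (repr kk)) (val b) h = bpt 1 (repr kk * (h' * h)).
Proof.
move=> Hk Hh Hh' ->; have Hr := repr_sectH Hk; have [Pr Er] := plinkP Hr.
rewrite bpt_act // mulg1.
have := bpt_cong Pr (group1 _) (group1 _) (linkH_in Hr) (group1 _) (groupM Hh' Hh) Er.
by rewrite !mul1g.
Qed.

Lemma orbH_act kk (b : orbH) h h' : kk \in K -> h \in H -> h' \in H -> val b = bpt 1 h' ->
  val (bact orbH kk b h) = bpt 1 (repr kk * (h' * h)).
Proof.
move=> Hk Hh Hh' E /=; rewrite insubdK; first exact: orbH_bact.
rewrite /= (orbH_bact Hk Hh Hh' E); apply/orbHP; exists (repr kk * (h' * h)) => //.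
by rewrite !groupM // linkH_in // repr_sectH.
Qed.

Lemma is_biset_orbP : is_biset P K orbP.
Proof.
split.
  by move=> a; apply: val_inj; rewrite orbP_act ?group1 // repr_coset1 (bact1 HY).
move=> x1 x2 k1 k2 a X1 X2 K1 K2; apply: val_inj.
have K21 : k2 * k1 \in K by rewrite groupM.
have X12 : x1 * x2 \in P by rewrite groupM.
have R1 := linkH_in (repr_sectH K1); have R2 := linkH_in (repr_sectH K2).
have R21 := linkH_in (repr_sectH K21).
rewrite !orbP_act // (bactM HY) //.
have [q Hq ->] := orbP_val a.
rewrite !bpt_act ?groupM // ?mul1g.
by rewrite -[repr (k2 * k1)]mulg1 bpt_reprM ?groupM // mulg1.
Qed.

Lemma is_biset_orbH : is_biset K H orbH.
Proof.
split.
  move=> b; apply: val_inj; have [h' Hh' E] := orbH_val b.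
  by rewrite (orbH_act _ _ _ E) ?group1 // repr_coset1 mul1g mulg1.
move=> k1 k2 h1 h2 b K1 K2 H1 H2; apply: val_inj.
have [h' Hh' E] := orbH_val b.
have E2 := orbH_act K2 H2 Hh' E.
have R1 := linkH_in (repr_sectH K1); have R2 := linkH_in (repr_sectH K2).
rewrite (orbH_act K1 H1 (groupM R2 (groupM Hh' H2)) E2).
rewrite (orbH_act (groupM K1 K2) (groupM H2 H1) Hh' E) bpt_reprM ?groupM //.
by rewrite !mulgA.
Qed.

Definition orbP_repr (a : orbP) := odflt 1 [pick p in P | bpt p 1 == val a].

Lemma orbP_reprP a : orbP_repr a \in P /\ bpt (orbP_repr a) 1 = val a.
Proof.
have [q Hq E] := orbP_val a; rewrite /orbP_repr; case: pickP => [p /andP [Hp /eqP Ep]|H0] //=.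
by have := H0 q; rewrite Hq E eqxx.
Qed.

Definition merge (q : orbP * orbH) : Y := bact Y (orbP_repr q.1) (val q.2) 1.

Lemma mergeE a b p r h : p \in P -> r \in H -> h \in H -> val a = bpt p r -> val b = bpt 1 h ->
  merge (a, b) = bpt p (r * h).
Proof.
move=> Hp Hr Hh Ea Eb; rewrite /merge /= Eb; have [Pa Ea'] := orbP_reprP a.
rewrite -bpt_l // bpt_r // Ea' Ea bpt_act ?group1 //.
by rewrite mul1g.
Qed.

Lemma merge_shift q kk : kk \in K ->
  merge (bact orbP 1 q.1 kk, bact orbH kk^-1 q.2 1) = merge q.
Proof.
case: q => a b Hk /=; have [p Hp Ea] := orbP_val a; have [h Hh Eb] := orbH_val b.
have Rk := linkH_in (repr_sectH Hk); have Rk' := linkH_in (repr_sectH (groupVr Hk)).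
have Ea' : val (bact orbP 1 a kk) = bpt p (repr kk).
  by rewrite orbP_act ?group1 // Ea bpt_act ?group1 // !mul1g.
have Eb' := orbH_act (groupVr Hk) (group1 _) Hh Eb.
rewrite (mergeE Hp Rk (groupM Rk' (groupM Hh (group1 _))) Ea' Eb') //.
rewrite (mergeE Hp (group1 _) Hh Ea Eb) mulgA -bpt_reprM ?groupV //.
  by rewrite mulgV repr_coset1 mulg1.
by rewrite mulg1.
Qed.

Definition merge_map : bcomp K orbP orbH -> Y := bcomp_lift merge.

Lemma merge_mapE q : merge_map (bcomp_cls K q) = merge q.
Proof. by apply: (bcomp_liftE is_biset_orbP is_biset_orbH) => p y Hy; apply: merge_shift. Qed.

Lemma merge_map_morph x A z : x \in P -> z \in H ->
  merge_map (bact (bcomp K orbP orbH) x A z) = bact Y x (merge_map A) z.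
Proof.
move=> Hx Hz; have [[a b] ->] := bcomp_clsP A.
have [p Hp Ea] := orbP_val a; have [h Hh Eb] := orbH_val b.
rewrite (bcomp_actE is_biset_orbP is_biset_orbH) // !merge_mapE.
have Ea' : val (bact orbP x a 1) = bpt (x * p) 1.
  by rewrite orbP_act ?group1 // repr_coset1 Ea bpt_act ?group1 // mulg1.
have Eb' := orbH_act (group1 _) Hz Hh Eb; rewrite repr_coset1 mul1g in Eb'.
rewrite (mergeE (groupM Hx Hp) (group1 _) (groupM Hh Hz) Ea' Eb') /=.
by rewrite (mergeE Hp (group1 _) Hh Ea Eb) bpt_act ?group1 // !mul1g.
Qed.

Lemma mem_orbP_y0 : bpt 1 1 \in orbP_set.
Proof. by apply/orbPP; exists 1. Qed.
Lemma mem_orbH_y0 : bpt 1 1 \in orbH_set.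
Proof. by apply/orbHP; exists 1. Qed.

Definition orbP_y0 : orbP := Sub (bpt 1 1) mem_orbP_y0.
Definition orbH_y0 : orbH := Sub (bpt 1 1) mem_orbH_y0.
Definition orbP_of p : orbP := insubd orbP_y0 (bpt p 1).
Definition orbH_of h : orbH := insubd orbH_y0 (bpt 1 h).

Lemma val_orbP_of p : p \in P -> val (orbP_of p) = bpt p 1.
Proof. by move=> Hp; rewrite /orbP_of insubdK //=; apply/orbPP; exists p. Qed.
Lemma val_orbH_of h : h \in H -> val (orbH_of h) = bpt 1 h.
Proof. by move=> Hh; rewrite /orbH_of insubdK //=; apply/orbHP; exists h. Qed.

Local Notation clsK := (@bcomp_cls _ _ _ K orbP orbH).

Lemma split_cls_eq p h p' h' : p \in P -> h \in H -> p' \in P -> h' \in H ->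
  bpt p h = bpt p' h' -> clsK (orbP_of p, orbH_of h) = clsK (orbP_of p', orbH_of h').
Proof.
move=> Hp Hh Hp' Hh' E.
have Hr : h * h'^-1 \in linkH.
  apply/linkHP; split; first by rewrite groupM ?groupV.
  exists (p^-1 * p'); first by rewrite groupM ?groupV.
  have := bpt_cong Hp' Hh' Hp Hh (groupVr Hp) (groupVr Hh') (esym E).
  by rewrite mulVg mulgV.
set r := h * h'^-1 in Hr.
have Kk : coset stabH_group r \in K by apply: mem_quotient.
rewrite -(bcomp_cls_shift is_biset_orbP is_biset_orbH (orbP_of p, orbH_of h) Kk) /=.
congr clsK; congr pair; apply: val_inj.
  rewrite orbP_act ?group1 // val_orbP_of // val_orbP_of //.
  rewrite bpt_act ?group1 ?linkH_in ?repr_sectH //.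
  have := bpt_repr_coset Hp (group1 _) Hr; rewrite !mulg1 => E1.
  rewrite (mul1g (repr _)) mul1g E1 /r.
  have := bpt_cong Hp Hh Hp' Hh' (group1 _) (groupVr Hh') E.
  by rewrite !mul1g mulgV.
rewrite (orbH_act (groupVr Kk) (group1 _) Hh (val_orbH_of Hh)) val_orbH_of //.
rewrite (bpt_reprV (group1 _) (groupM Hh (group1 _)) Hr) /r.
by rewrite invMg invgK mulg1 -mulgA mulVg mulg1.
Qed.

Hypothesis Ytrans : btransitive P H Y y0.

Definition split_map (y : Y) : bcomp K orbP orbH :=
  match [pick ph : pT * hT | (ph.1 \in P) && (ph.2 \in H) && (y == bpt ph.1 ph.2)] with
  | Some ph => clsK (orbP_of ph.1, orbH_of ph.2)
  | None => clsK (orbP_y0, orbH_y0) end.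

Lemma split_mapE p h : p \in P -> h \in H -> split_map (bpt p h) = clsK (orbP_of p, orbH_of h).
Proof.
move=> Hp Hh; rewrite /split_map.
case: pickP => [[p' h'] /= /andP [/andP [Hp' Hh'] /eqP E] | H0].
  by apply: split_cls_eq.
by have := H0 (p, h); rewrite /= Hp Hh eqxx.
Qed.

Lemma transitive_biset_factor : biset_iso P H Y (bcomp K orbP orbH).
Proof.
apply: biset_iso_sym; exists merge_map; split; last first.
  by move=> x A z Hx Hz; apply: merge_map_morph.
exists split_map.
  move=> A; have [[a b] ->] := bcomp_clsP A.
  have [p Hp Ea] := orbP_val a; have [h Hh Eb] := orbH_val b.
  rewrite merge_mapE (mergeE Hp (group1 _) Hh Ea Eb) mul1g split_mapE //.
  by congr clsK; congr pair; apply: val_inj; rewrite ?val_orbP_of ?val_orbH_of.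
move=> y; have [p [h [Hp Hh ->]]] := Ytrans y.
rewrite split_mapE // merge_mapE (mergeE Hp (group1 _) Hh (val_orbP_of Hp) (val_orbH_of Hh)).
by rewrite mul1g.
Qed.
End TransitiveFactorization.

Section LargeSection.
Local Open Scope group_scope.
Variables (pT hT : finGroupType) (P : {group pT}) (H : {group hT}).
Variables (Y : biset pT hT) (HY : is_biset P H Y) (y0 : Y).

Local Notation bpt := (bpt y0).
Local Notation bpt_cong := (bpt_cong HY).

Hypothesis large_sectH : ~~ (#|sectH HY y0| < #|H|)%N.

Lemma card_stabH_linkH : #|stabH H y0| = 1%N /\ #|linkH P H y0| = #|H|.
Proof.
have /= Lag := @Lagrange _ (linkH_group HY y0) (stabH_group HY y0) (stabH_sub P H y0).
have le_link := subset_leq_card (linkH_sub P H y0).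
have le_index : (#|H| <= #|linkH P H y0 : stabH H y0|)%N.
  by move: large_sectH; rewrite -leqNgt /sectH card_quotient ?linkH_norm.
have squeeze (s i t h : nat) : (s * i)%N = t -> (h <= i)%N -> (t <= h)%N ->
    (0 < s)%N -> (0 < h)%N -> s = 1%N /\ t = h.
  by move=> *; split; nia.
exact: squeeze Lag le_index le_link (cardG_gt0 (stabH_group HY y0)) (cardG_gt0 H).
Qed.

Lemma linkH_full : linkH P H y0 = H.
Proof. by apply/eqP; rewrite eqEcard linkH_sub card_stabH_linkH.2 /=. Qed.

Lemma bpt_inj h h' : h \in H -> h' \in H -> bpt 1 h = bpt 1 h' -> h = h'.
Proof.
move=> Hh Hh' E; apply/eqP; rewrite eq_mulgV1.
have /card_le1_trivg stab1 : (#|stabH_group HY y0| <= 1)%N by rewrite card_stabH_linkH.1.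
apply/eqP/set1gP; rewrite -stab1; apply/(stabHP H y0); split; first by rewrite groupM ?groupV.
have := bpt_cong (group1 _) Hh (group1 _) Hh' (group1 _) (groupVr Hh') E.
by rewrite !mulg1 mulgV.
Qed.

Definition linkP := [set p in P | [exists h in H, bpt p 1 == bpt 1 h]].

Lemma linkPP p : reflect (p \in P /\ exists2 h, h \in H & bpt p 1 = bpt 1 h) (p \in linkP).
Proof.
rewrite inE; apply: (iffP andP) => [[Hp /existsP [h /andP [Hh /eqP E]]]|[Hp [h Hh E]]].
  by split => //; exists h.
by split => //; apply/existsP; exists h; rewrite Hh E eqxx.
Qed.

Lemma bpt_linkM p q hp hq : p \in P -> q \in P -> hp \in H -> hq \in H ->
  bpt p 1 = bpt 1 hp -> bpt q 1 = bpt 1 hq -> bpt (p * q) 1 = bpt 1 (hp * hq).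
Proof.
move=> Hp Hq Hhp Hhq Ep Eq.
have := bpt_cong Hq (group1 _) (group1 _) Hhq Hp (group1 _) Eq.
rewrite !mulg1 => ->.
have := bpt_cong Hp (group1 _) (group1 _) Hhp (group1 _) Hhq Ep.
by rewrite !mul1g.
Qed.

Lemma group_set_linkP : group_set linkP.
Proof.
apply/group_setP; split; first by apply/linkPP; split => //; exists 1.
move=> p q /linkPP [Hp [hp Hhp Ep]] /linkPP [Hq [hq Hhq Eq]]; apply/linkPP.
split; first exact: groupM.
by exists (hp * hq); [exact: groupM | exact: bpt_linkM].
Qed.

Canonical linkP_group := Group group_set_linkP.

Definition link_map p := odflt 1 [pick h in H | bpt p 1 == bpt 1 h].

Lemma link_mapP p : p \in linkP -> link_map p \in H /\ bpt p 1 = bpt 1 (link_map p).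
Proof.
move=> /linkPP [Hp [h Hh E]]; rewrite /link_map.
case: pickP => [h' /andP [Hh' /eqP E'] | H0] //=.
by have := H0 h; rewrite Hh E eqxx.
Qed.

Lemma link_mapM : {in linkP_group &, {morph link_map : x y / x * y}}.
Proof.
move=> p q Sp Sq; have [Hp Ep] := link_mapP Sp; have [Hq Eq] := link_mapP Sq.
have Spq : p * q \in linkP by rewrite groupM.
have [Hpq Epq] := link_mapP Spq.
apply: bpt_inj => //; first exact: groupM.
rewrite -Epq; apply: bpt_linkM => //.
  by move: Sp => /linkPP [].
by move: Sq => /linkPP [].
Qed.

Definition link_morph := Morphism link_mapM.

Lemma link_morphim : link_morph @* linkP_group = H.
Proof.
apply/eqP; rewrite eqEsubset; apply/andP; split.
  apply/subsetP => h; rewrite morphimEdom => /imsetP [p Sp ->].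
  by have [] := link_mapP Sp.
apply/subsetP => h Hh; have := Hh; rewrite -linkH_full => /(linkHP P H y0) [_ [p Hp E]].
have Sp : p \in linkP by apply/linkPP; split => //; exists h.
have [Hph Eph] := link_mapP Sp.
have -> : h = link_morph p by apply: bpt_inj => //; rewrite -E Eph.
exact: mem_morphim.
Qed.

Lemma subquotient_of_sectH : subquotient H P.
Proof.
exists linkP_group, ('ker link_morph)%G; split.
- by apply/subsetP => p /linkPP [].
- exact: ker_normal.
- by rewrite isog_sym /= -{1}link_morphim first_isog.
Qed.
End LargeSection.

Section Decomposition.
Local Open Scope ring_scope.
Variables (k : fieldType) (W : lmodType k) (gT pT hT : finGroupType).
Variables (G : {group gT}) (P : {group pT}) (H : {group hT}).
Variables (rho : biset gT gT -> W -> W) (f : biset gT hT -> W).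
Hypotheses (Hf : is_Bhom G rho H f) (Hkill : kills_I G H f).
Variables (U : biset gT pT) (HU : is_biset G P U).

Lemma sqlt_sectH (Y : biset pT hT) (HY : is_biset P H Y) y0 :
  (#|sectH HY y0| < #|H|)%N -> sqlt (sectH HY y0) H.
Proof.
move=> ltKH; split=> //; exists (linkH_group HY y0), (stabH_group HY y0).
by split; [exact: linkH_sub | exact: stabH_normal | exact: isog_refl].
Qed.

Lemma transitive_bcomp_killed (Y : biset pT hT) y0 :
  is_biset P H Y -> btransitive P H Y y0 -> subquotient H P \/ f (bcomp P U Y) = 0.
Proof.
move=> HY Ytrans; set K := sectH HY y0.
have HA := is_biset_orbP HY y0; have HB := is_biset_orbH HY y0.
have HAB := is_biset_bcomp HA HB; have HUA := is_biset_bcomp HU HA.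
have -> : f (bcomp P U Y) = f (bcomp K (bcomp P U (orbP HY y0)) (orbH HY y0)).
  apply: (Bhom_iso Hf (is_biset_bcomp HU HY) (is_biset_bcomp HUA HB)).
  apply: (biset_iso_trans _ (biset_iso_sym (bcomp_assoc HU HA HB))).
  exact: (bcomp_iso HU HY HU HAB (biset_iso_refl G P U) (transitive_biset_factor HY Ytrans)).
have [ltKH | leHK] := ltnP #|K| #|H|.
  by right; apply: Hkill => //; apply: sqlt_sectH.
by left; apply: (subquotient_of_sectH (y0 := y0)); rewrite -leqNgt.
Qed.

Lemma bcomp_killed (Y : biset pT hT) :
  is_biset P H Y -> subquotient H P \/ f (bcomp P U Y) = 0.
Proof.
move: {2}#|Y| (leqnn #|Y|) => n; elim: n Y => [|n IHn] Y leYn HY.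
  right; apply: (Bhom_card0 Hf (is_biset_bcomp HU HY)).
  by apply: card_bcomp0r; apply/eqP; rewrite -leqn0.
have [Y0 | /card_gt0P [y0 _]] := posnP #|Y|.
  by right; apply: (Bhom_card0 Hf (is_biset_bcomp HU HY)); apply: card_bcomp0r.
set O := borbit P H y0; have HO := bclosed_borbit HY (u0 := y0).
have HS := is_biset_bsub HY HO; have HSc := is_biset_bsub HY (bclosedC HY HO).
have HSS := is_biset_bunion HS HSc.
have -> : f (bcomp P U Y) = f (bcomp P U (bsub O)) + f (bcomp P U (bsub (~: O))).
  have HUS := is_biset_bcomp HU HS; have HUSc := is_biset_bcomp HU HSc.
  rewrite -(Bhom_bunion Hf HUS HUSc).
  apply: (Bhom_iso Hf (is_biset_bcomp HU HY) (is_biset_bunion HUS HUSc)).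
  apply: (biset_iso_trans _ (bcomp_bunionr HU HS HSc)).
  exact: bcomp_iso (biset_iso_refl G P U) (bsub_split_iso HY HO).
have leSn : (#|bsub (~: O)| <= n)%N.
  rewrite card_bsub -ltnS; apply: leq_trans leYn.
  by rewrite -(cardsC O) -add1n leq_add2r; apply/card_gt0P; exists y0; apply: mem_borbit.
have [sqHP | ->] := transitive_bcomp_killed HS (btransitive_borbit HY (u0 := y0)).
  by left.
have [sqHP | ->] := IHn _ leSn HSc; first by left.
by right; rewrite addr0.
Qed.

End Decomposition.

Lemma passes_through_subquotient (k : fieldType) (W : lmodType k)
    (gT : finGroupType) (G : {group gT}) (rho : biset gT gT -> W -> W)
    (pT : finGroupType) (P : {group pT}) (hT : finGroupType) (H : {group hT}) :
  is_Bmodule G rho -> passes_through G rho P -> quotient_of_Bbar G rho H ->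
  subquotient H P.
Proof.
move=> HB [U [V [w [HU HV Hnz]]]] [f [Hf Hkill Honto]].
have HUV := is_biset_bcomp HU HV.
have killed (X : biset gT hT) : is_biset G H X ->
    subquotient H P \/ rho (bcomp P U V) (f X) = 0%R.
  move=> HX; have HVX := is_biset_bcomp HV HX.
  rewrite -(Bhom_bcomp Hf HUV HX).
  rewrite (Bhom_iso Hf (is_biset_bcomp HUV HX) (is_biset_bcomp HU HVX) (bcomp_assoc HU HV HX)).
  exact: (bcomp_killed Hf Hkill HU HVX).
have [n [c [X [HX Ew]]]] := Honto w.
case: (pickP (fun i : 'I_n => rho (bcomp P U V) (f (X i)) != 0%R)) => [i Hi | Hall].
  by case: (killed _ (HX i)) => // Ei; rewrite Ei eqxx in Hi.
case/eqP: Hnz; rewrite Ew (rho_sum HB) // big1 // => i _.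
by move/negbFE/eqP: (Hall i) => ->; rewrite scaler0.
Qed.

Theorem proposition5p2 (k : fieldType) (W : lmodType k) (gT : finGroupType)
    (G : {group gT}) (rho : biset gT gT -> W -> W)
    (pT : finGroupType) (P : {group pT}) :
  simple_Bmodule G rho -> minimal_group G rho P ->
  quotient_of_Bbar G rho P /\
  (forall (hT : finGroupType) (H : {group hT}),
     quotient_of_Bbar G rho H -> subquotient H P).
Proof.
move=> Hsimple Hmin; split; first exact: minimal_group_quotient_of_Bbar.
have [HB _ _] := Hsimple.
by move=> hT H; apply: passes_through_subquotient HB Hmin.1.
Qed.
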